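(* Let $X_1\subset X_0$ be Banach spaces with continuous embedding, $q\in[1,\infty]$, and set $X_\theta:=(X_0,X_1)_{\theta,q}$ for $\theta\in(0,1)$ (real interpolation). Let $0<\theta_1<\theta_2<\cdots<\theta_n<1$ be fixed. Suppose $l\in X_0'$ satisfies, for some $C_0,C_1,\varepsilon>0$, $$|l(f)|\le C_0\|f\|_{X_0}\quad\forall f\in X_0,\qquad |l(f)|\le C_1\Big[\sum_{i=1}^n\varepsilon^{\theta_i}\|f\|_{X_{\theta_i}}+\varepsilon\|f\|_{X_1}\Big]\quad\forall f\in X_1.$$ Then there is a constant $C>0$, depending on $C_0,C_1$, the $\theta_i$, $q$ and the spaces but independent of $\varepsilon$, such that $|l(f)|\le C\varepsilon^{\theta_1}\|f\|_{X_{\theta_1}}$ for all $f\in X_{\theta_1}$.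
   Context: $(X_0,X_1)_{\theta,q}$ denotes the real ($K$-method) interpolation space with $K(t,f)=\inf_{g\in X_1}(\|f-g\|_{X_0}+t\|g\|_{X_1})$. *)

From Stdlib Require Import Reals Lra ClassicalEpsilon.
Open Scope R_scope.

(** Supremum of a real set (value 0 if not nonempty-and-bounded-above). *)
Definition Rsup (E : R -> Prop) : R :=
  match excluded_middle_informative (bound E /\ exists x, E x) with
  | left H => proj1_sig (completeness E (proj1 H) (proj2 H))
  | right _ => 0
  end.

(** Infimum (value 0 if not nonempty-and-bounded-below). *)
Definition Rinf (E : R -> Prop) : R := - Rsup (fun x => E (- x)).

Definition rpow (x p : R) : R :=
  if Req_EM_T x 0 then 0 else Rpower x p.

(** A pair of Banach spaces X1 ⊂ X0 with continuous embedding.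
    X0 is the carrier V with norm n0; X1 is the subspace {x | X1 x} with norm n1. *)
Record banach_couple := {
  V : Type;
  vzero : V;
  vadd : V -> V -> V;
  vopp : V -> V;
  vscal : R -> V -> V;
  vadd_assoc : forall x y z, vadd x (vadd y z) = vadd (vadd x y) z;
  vadd_comm : forall x y, vadd x y = vadd y x;
  vadd_0 : forall x, vadd x vzero = x;
  vadd_opp : forall x, vadd x (vopp x) = vzero;
  vscal_1 : forall x, vscal 1 x = x;
  vscal_assoc : forall a b x, vscal a (vscal b x) = vscal (a * b) x;
  vscal_distr_v : forall a x y, vscal a (vadd x y) = vadd (vscal a x) (vscal a y);
  vscal_distr_s : forall a b x, vscal (a + b) x = vadd (vscal a x) (vscal b x);
  n0 : V -> R;
  n0_nonneg : forall x, 0 <= n0 x;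
  n0_def : forall x, n0 x = 0 -> x = vzero;
  n0_scal : forall a x, n0 (vscal a x) = Rabs a * n0 x;
  n0_triangle : forall x y, n0 (vadd x y) <= n0 x + n0 y;
  n0_complete : forall u : nat -> V,
    (forall e, 0 < e -> exists N, forall m k, (N <= m)%nat -> (N <= k)%nat ->
        n0 (vadd (u m) (vopp (u k))) < e) ->
    exists x, forall e, 0 < e -> exists N, forall m, (N <= m)%nat ->
        n0 (vadd (u m) (vopp x)) < e;
  X1 : V -> Prop;
  X1_zero : X1 vzero;
  X1_add : forall x y, X1 x -> X1 y -> X1 (vadd x y);
  X1_scal : forall a x, X1 x -> X1 (vscal a x);
  n1 : V -> R;
  n1_nonneg : forall x, X1 x -> 0 <= n1 x;
  n1_def : forall x, X1 x -> n1 x = 0 -> x = vzero;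
  n1_scal : forall a x, X1 x -> n1 (vscal a x) = Rabs a * n1 x;
  n1_triangle : forall x y, X1 x -> X1 y -> n1 (vadd x y) <= n1 x + n1 y;
  n1_complete : forall u : nat -> V, (forall m, X1 (u m)) ->
    (forall e, 0 < e -> exists N, forall m k, (N <= m)%nat -> (N <= k)%nat ->
        n1 (vadd (u m) (vopp (u k))) < e) ->
    exists x, X1 x /\ forall e, 0 < e -> exists N, forall m, (N <= m)%nat ->
        n1 (vadd (u m) (vopp x)) < e;
  embed : exists c, 0 < c /\ forall x, X1 x -> n0 x <= c * n1 x
}.

Arguments vadd {_}. Arguments vopp {_}. Arguments vscal {_}.
Arguments n0 {_}. Arguments n1 {_}. Arguments X1 {_}.

Definition Kfun (B : banach_couple) (t : R) (f : V B) : R :=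
  Rinf (fun k => exists g, X1 g /\ k = n0 (vadd f (vopp g)) + t * n1 g).

Inductive qexp := qfin (q : R) | qinf.
Definition qexp_ok (q : qexp) : Prop :=
  match q with qfin r => 1 <= r | qinf => True end.

Definition lower_sums (g : R -> R) (s : R) : Prop :=
  exists a b (n : nat), 0 < a /\ a < b /\
    s = sum_f_R0 (fun i =>
          let h := (b - a) / (INR n + 1) in
          h * Rinf (fun y => exists x, a + INR i * h <= x <= a + (INR i + 1) * h
                                     /\ y = g x)) n.

(** Integral over (0,∞) of a nonnegative function (as a sup of lower sums);
    it is finite iff the set of lower sums is bounded. *)
Definition integrable0inf (g : R -> R) : Prop := bound (lower_sums g).
Definition integral0inf (g : R -> R) : R := Rsup (lower_sums g).

Definition tK (B : banach_couple) (theta t : R) (f : V B) : R :=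
  Rpower t (- theta) * Kfun B t f.

Definition in_interp (B : banach_couple) (theta : R) (q : qexp) (f : V B) : Prop :=
  match q with
  | qfin r => integrable0inf (fun t => rpow (tK B theta t f) r / t)
  | qinf => bound (fun y => exists t, 0 < t /\ y = tK B theta t f)
  end.

Definition interp_norm (B : banach_couple) (theta : R) (q : qexp) (f : V B) : R :=
  match q with
  | qfin r => rpow (integral0inf (fun t => rpow (tK B theta t f) r / t)) (1 / r)
  | qinf => Rsup (fun y => exists t, 0 < t /\ y = tK B theta t f)
  end.

Definition linear_functional (B : banach_couple) (l : V B -> R) : Prop :=
  (forall x y, l (vadd x y) = l x + l y) /\ (forall a x, l (vscal a x) = a * l x).

(* Choose [g] in [X1] almost realizing [K(eps,f)] and split [l f = l (f - g) + l g].  Since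
   [K(t,f) <= 4 t^theta ||f||_theta], the first term is [<= C0 ||f - g||_0 <~ K(eps,f)
   <~ eps^theta_1 ||f||_theta_1], and likewise [eps ||g||_1 <~ eps^theta_1 ||f||_theta_1].
   The profile of [g] satisfies [K(t,g) <= 3 K(t,f)], which bounds [||g||_theta_1]; for
   [theta_i > theta_1] the sharper bounds [K(t,g) <= t ||g||_1 <~ (t/eps) K(eps,f)] for [t <= eps]
   and [K(t,g) <= K(t,f) + 2 K(eps,f)] for [t >= eps] are two power laws, whose [theta_i]-norm
   integrates to [<~ eps^(theta_1 - theta_i) ||f||_theta_1]. *)

From Stdlib Require Import Reals Lra Lia Classical ClassicalEpsilon.
Open Scope R_scope.

Lemma Rsup_ub E x : bound E -> E x -> x <= Rsup E.
Proof.
  intros Hb Hx. unfold Rsup.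
  destruct (excluded_middle_informative _) as [H|H].
  - destruct (completeness E _ _) as [m [Hub Hlub]]; simpl. now apply Hub.
  - exfalso; apply H; split; [exact Hb | now exists x].
Qed.

Lemma Rsup_le E M : (exists x, E x) -> (forall x, E x -> x <= M) -> Rsup E <= M.
Proof.
  intros Hne Hm. unfold Rsup.
  destruct (excluded_middle_informative _) as [H|H].
  - destruct (completeness E _ _) as [m [Hub Hlub]]; simpl. apply Hlub. intros y Hy; now apply Hm.
  - exfalso; apply H; split; [exists M; intros y Hy; now apply Hm | exact Hne].
Qed.

Lemma Rinf_lb E x : (exists m, forall y, E y -> m <= y) -> E x -> Rinf E <= x.
Proof.
  intros [m Hm] Hx. unfold Rinf.
  enough (- x <= Rsup (fun y => E (- y))) by lra.
  apply Rsup_ub.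
  - exists (- m). intros y Hy. specialize (Hm _ Hy). lra.
  - now rewrite Ropp_involutive.
Qed.

Lemma Rinf_ge E m : (exists x, E x) -> (forall y, E y -> m <= y) -> m <= Rinf E.
Proof.
  intros [x Hx] Hm. unfold Rinf.
  enough (Rsup (fun y => E (- y)) <= - m) by lra.
  apply Rsup_le.
  - exists (- x). now rewrite Ropp_involutive.
  - intros y Hy. specialize (Hm _ Hy). lra.
Qed.

Lemma Rinf_approx E d : (exists x, E x) -> (exists m, forall y, E y -> m <= y) -> 0 < d ->
  exists x, E x /\ x < Rinf E + d.
Proof.
  intros Hne Hb Hd. apply NNPP. intro Hn.
  enough (Rinf E + d <= Rinf E) by lra.
  apply Rinf_ge; auto. intros y Hy. apply Rnot_lt_le. intro Hl. apply Hn. now exists y.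
Qed.

Section CoupleAlgebra.
Variable B : banach_couple.
Notation vz := (vzero B).

Lemma vadd_shuffle (a b c d : V B) : vadd (vadd a b) (vadd c d) = vadd (vadd a c) (vadd b d).
Proof. rewrite <- !vadd_assoc. f_equal. rewrite !vadd_assoc. f_equal. apply vadd_comm. Qed.

Lemma vadd_0l (x : V B) : vadd vz x = x.
Proof. rewrite vadd_comm. apply vadd_0. Qed.

Lemma vadd_oppl (x : V B) : vadd (vopp x) x = vz.
Proof. rewrite vadd_comm. apply vadd_opp. Qed.

Lemma vopp_unique (x y : V B) : vadd x y = vz -> y = vopp x.
Proof.
  intros H. rewrite <- (vadd_0 _ y), <- (vadd_opp _ x), vadd_assoc, (vadd_comm _ y x), H.
  apply vadd_0l.
Qed.

Lemma vscal_0 (x : V B) : vscal 0 x = vz.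
Proof.
  set (s := vscal 0 x).
  assert (Hs : vadd s s = s) by (unfold s; rewrite <- vscal_distr_s; f_equal; ring).
  rewrite <- (vadd_opp _ s). pattern s at 2. rewrite <- Hs.
  now rewrite <- vadd_assoc, vadd_opp, vadd_0.
Qed.

Lemma vopp_scal (x : V B) : vopp x = vscal (-1) x.
Proof.
  symmetry. apply vopp_unique. rewrite <- (vscal_1 _ x) at 1. rewrite <- vscal_distr_s.
  replace (1 + -1) with 0 by ring. apply vscal_0.
Qed.

Lemma n0_opp (x : V B) : n0 (vopp x) = n0 x.
Proof. rewrite vopp_scal, n0_scal, Rabs_left by lra. ring. Qed.

Lemma n0_zero : n0 vz = 0.
Proof. rewrite <- (vscal_0 vz), n0_scal, Rabs_R0. ring. Qed.

Lemma n0_sub_sym (f g : V B) : n0 (vadd g (vopp f)) = n0 (vadd f (vopp g)).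
Proof.
  rewrite <- n0_opp. f_equal. symmetry. apply vopp_unique.
  rewrite (vadd_comm _ g), vadd_shuffle, vadd_opp, vadd_oppl. apply vadd_0.
Qed.

Lemma n0_sub_triangle (f g h : V B) :
  n0 (vadd g (vopp h)) <= n0 (vadd f (vopp h)) + n0 (vadd f (vopp g)).
Proof.
  rewrite <- (n0_sub_sym f g).
  replace (vadd g (vopp h)) with (vadd (vadd f (vopp h)) (vadd g (vopp f))) by
    (rewrite (vadd_comm _ g), vadd_shuffle, vadd_opp, vadd_0l; apply vadd_comm).
  apply n0_triangle.
Qed.

Lemma vsub_addK (f g : V B) : vadd (vadd f (vopp g)) g = f.
Proof. now rewrite <- vadd_assoc, vadd_oppl, vadd_0. Qed.

End CoupleAlgebra.

Section KFunctional.
Variable B : banach_couple.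

Let Kset (t : R) (f : V B) : R -> Prop :=
  fun k => exists g, X1 g /\ k = n0 (vadd f (vopp g)) + t * n1 g.

Let Kset_nonempty t f : exists k, Kset t f k.
Proof. exists (n0 (vadd f (vopp (vzero B))) + t * n1 (vzero B)), (vzero B). split; auto. apply X1_zero. Qed.

Let Kset_bounded t f : 0 <= t -> exists m, forall k, Kset t f k -> m <= k.
Proof.
  intros Ht. exists 0. intros k [g [Hg ->]].
  pose proof (n0_nonneg _ (vadd f (vopp g))). pose proof (n1_nonneg _ g Hg). nra.
Qed.

Lemma Kfun_le t (f g : V B) : 0 <= t -> X1 g -> Kfun B t f <= n0 (vadd f (vopp g)) + t * n1 g.
Proof. intros Ht Hg. apply Rinf_lb; [now apply Kset_bounded | now exists g]. Qed.

Lemma Kfun_ge t (f : V B) M :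
  (forall g, X1 g -> M <= n0 (vadd f (vopp g)) + t * n1 g) -> M <= Kfun B t f.
Proof. intros H. apply Rinf_ge; [apply Kset_nonempty | intros y [g [Hg ->]]; auto]. Qed.

Lemma Kfun_ge0 t (f : V B) : 0 <= t -> 0 <= Kfun B t f.
Proof.
  intros Ht. apply Kfun_ge. intros g Hg.
  pose proof (n0_nonneg _ (vadd f (vopp g))). pose proof (n1_nonneg _ g Hg). nra.
Qed.

Lemma Kfun_approx t (f : V B) d : 0 <= t -> 0 < d ->
  exists g, X1 g /\ n0 (vadd f (vopp g)) + t * n1 g < Kfun B t f + d.
Proof.
  intros Ht Hd.
  destruct (Rinf_approx _ d (Kset_nonempty t f) (Kset_bounded t f Ht) Hd) as [y [[g [Hg ->]] Hy]].
  now exists g.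
Qed.

Lemma Kfun_mono s t (f : V B) : 0 <= s <= t -> Kfun B s f <= Kfun B t f.
Proof.
  intros Hs. apply Kfun_ge. intros g Hg.
  pose proof (Kfun_le s f g (proj1 Hs) Hg). pose proof (n1_nonneg _ g Hg). nra.
Qed.

Lemma Kfun_le_ratio s t (f : V B) : 0 < s <= t -> Kfun B t f <= t / s * Kfun B s f.
Proof.
  intros Hs.
  assert (Hst : 0 < s / t <= 1) by
    (split; [apply Rdiv_lt_0_compat; lra | apply Rmult_le_reg_r with t; field_simplify; lra]).
  enough (s / t * Kfun B t f <= Kfun B s f) as H.
  { apply Rmult_le_reg_l with (s / t); [lra|].
    replace (s / t * (t / s * Kfun B s f)) with (Kfun B s f) by (field; lra). exact H. }
  apply Kfun_ge. intros g Hg.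
  pose proof (Kfun_le t f g ltac:(lra) Hg).
  pose proof (n0_nonneg _ (vadd f (vopp g))). pose proof (n1_nonneg _ g Hg).
  apply Rle_trans with (s / t * (n0 (vadd f (vopp g)) + t * n1 g)); [apply Rmult_le_compat_l; lra|].
  replace (s / t * (n0 (vadd f (vopp g)) + t * n1 g))
    with (s / t * n0 (vadd f (vopp g)) + s * n1 g) by (field; lra).
  nra.
Qed.

Lemma Kfun_sub_le t (f g : V B) : 0 <= t -> Kfun B t g <= Kfun B t f + n0 (vadd f (vopp g)).
Proof.
  intros Ht. enough (Kfun B t g - n0 (vadd f (vopp g)) <= Kfun B t f) by lra.
  apply Kfun_ge. intros h Hh.
  pose proof (Kfun_le t g h Ht Hh). pose proof (n0_sub_triangle B f g h). lra.
Qed.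

Lemma Kfun_X1_le t (g : V B) : 0 <= t -> X1 g -> Kfun B t g <= t * n1 g.
Proof. intros Ht Hg. pose proof (Kfun_le t g g Ht Hg). rewrite vadd_opp, n0_zero in H. lra. Qed.

(* Uses the continuous embedding: an almost optimal [g] is small in [X1], hence in [X0]. *)
Lemma Kfun_eq0 t (f : V B) : 0 < t -> Kfun B t f = 0 -> n0 f = 0.
Proof.
  intros Ht HK. destruct (embed B) as [c [Hc Hemb]].
  pose proof (n0_nonneg _ f).
  destruct (Req_dec (n0 f) 0) as [E|E]; auto. exfalso.
  set (A := 1 + c / t). assert (HA : 0 < A) by (unfold A; pose proof (Rdiv_lt_0_compat c t Hc Ht); lra).
  set (d := n0 f / (2 * A)). assert (Hd : 0 < d) by (unfold d; apply Rdiv_lt_0_compat; lra).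
  destruct (Kfun_approx t f d ltac:(lra) Hd) as [g [Hg Hlt]]. rewrite HK in Hlt.
  pose proof (n0_nonneg _ (vadd f (vopp g))). pose proof (n1_nonneg _ g Hg). pose proof (Hemb g Hg).
  assert (n0 f <= n0 (vadd f (vopp g)) + n0 g) by (rewrite <- (vsub_addK B f g) at 1; apply n0_triangle).
  assert (n1 g < d / t) by (apply Rmult_lt_reg_l with t; [lra | field_simplify; lra]).
  assert (Hfd : n0 f < A * d).
  { assert (c * n1 g <= c * (d / t)) by (apply Rmult_le_compat_l; lra).
    replace (A * d) with (d + c * (d / t)) by (unfold A; field; lra). nra. }
  unfold d in Hfd. replace (A * (n0 f / (2 * A))) with (n0 f / 2) in Hfd by (field; lra). lra.
Qed.

End KFunctional.

Definition image_on (g : R -> R) (lo hi : R) : R -> Prop :=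
  fun y => exists x, lo <= x <= hi /\ y = g x.

Lemma Rinf_image_on_le g lo hi x : 0 < lo -> (forall t, 0 < t -> 0 <= g t) -> lo <= x <= hi ->
  Rinf (image_on g lo hi) <= g x.
Proof.
  intros Hlo Hg Hx. apply Rinf_lb; [|now exists x].
  exists 0. intros y [z [Hz ->]]. apply Hg; lra.
Qed.

Lemma Rinf_image_on_ge g lo hi m : lo <= hi -> (forall x, lo <= x <= hi -> m <= g x) ->
  m <= Rinf (image_on g lo hi).
Proof.
  intros Hlh H. apply Rinf_ge; [exists (g lo), lo; split; auto; lra|].
  intros y [z [Hz ->]]; auto.
Qed.

Lemma sum_f_R0_telescope (F : nat -> R) n : sum_f_R0 (fun i => F (S i) - F i) n = F (S n) - F 0%nat.
Proof. induction n; simpl; [ring | rewrite IHn; ring]. Qed.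

Section LowerSums.
Variable g : R -> R.
Hypothesis g_ge0 : forall t, 0 < t -> 0 <= g t.

Lemma lower_sums_single s : 0 < s -> lower_sums g (s * Rinf (image_on g s (2 * s))).
Proof.
  intros Hs. exists s, (2 * s), 0%nat. do 2 (split; [lra|]). simpl.
  replace ((2 * s - s) / (0 + 1)) with s by field.
  now replace (s + 0 * s) with s by ring; replace (s + (0 + 1) * s) with (2 * s) by ring.
Qed.

Lemma lower_sums_nonempty : exists s, lower_sums g s.
Proof. exists (1 * Rinf (image_on g 1 (2 * 1))). apply lower_sums_single; lra. Qed.

Lemma lower_sums_ge0 s : lower_sums g s -> 0 <= s.
Proof.
  intros [a [b [n [Ha [Hab ->]]]]].
  assert (Hh : 0 < (b - a) / (INR n + 1)) by (apply Rdiv_lt_0_compat; pose proof (pos_INR n); lra).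
  apply cond_pos_sum. intros i. pose proof (pos_INR i).
  apply Rmult_le_pos; [lra|]. apply Rinf_image_on_ge; [nra|]. intros x Hx. apply g_ge0. nra.
Qed.

Lemma integral0inf_ge0 : integrable0inf g -> 0 <= integral0inf g.
Proof.
  intros Hb. destruct lower_sums_nonempty as [s Hs].
  apply Rle_trans with s; [now apply lower_sums_ge0 | now apply Rsup_ub].
Qed.

(* Each lower sum over a subdivision is a sum of cell contributions, which telescopes. *)
Lemma lower_sums_le_increment G M :
  (forall x y, 0 < x -> x < y -> (y - x) * Rinf (image_on g x y) <= G y - G x) ->
  (forall x y, 0 < x -> x < y -> G y - G x <= M) ->
  forall s, lower_sums g s -> s <= M.
Proof.
  intros Hcell HM s [a [b [n [Ha [Hab ->]]]]].
  set (h := (b - a) / (INR n + 1)).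
  assert (Hh : 0 < h) by (apply Rdiv_lt_0_compat; pose proof (pos_INR n); lra).
  apply Rle_trans with (sum_f_R0 (fun i => G (a + INR (S i) * h) - G (a + INR i * h)) n).
  - apply sum_Rle. intros i _. rewrite S_INR. pose proof (pos_INR i).
    specialize (Hcell (a + INR i * h) (a + (INR i + 1) * h) ltac:(nra) ltac:(nra)).
    now replace (a + (INR i + 1) * h - (a + INR i * h)) with h in Hcell by ring.
  - rewrite (sum_f_R0_telescope (fun k => G (a + INR k * h))), S_INR.
    replace (a + (INR n + 1) * h) with b by (unfold h; field; pose proof (pos_INR n); lra).
    replace (a + INR 0 * h) with a by (simpl; ring). now apply HM.
Qed.

End LowerSums.

Lemma lower_sums_le_scaled g f c : 0 < c -> (forall t, 0 < t -> 0 <= g t <= c * f t) ->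
  bound (lower_sums f) -> forall s, lower_sums g s -> s <= c * Rsup (lower_sums f).
Proof.
  intros Hc Hgf Hb s [a [b [n [Ha [Hab ->]]]]].
  set (h := (b - a) / (INR n + 1)).
  assert (Hh : 0 < h) by (apply Rdiv_lt_0_compat; pose proof (pos_INR n); lra).
  set (cell := fun (u : R -> R) i => h * Rinf (image_on u (a + INR i * h) (a + (INR i + 1) * h))).
  assert (Hf : lower_sums f (sum_f_R0 (cell f) n)) by (exists a, b, n; repeat split; auto).
  apply Rle_trans with (c * sum_f_R0 (cell f) n);
    [|apply Rmult_le_compat_l; [lra | now apply Rsup_ub]].
  rewrite scal_sum. apply sum_Rle. intros i _. pose proof (pos_INR i). unfold cell.
  enough (Rinf (image_on g (a + INR i * h) (a + (INR i + 1) * h)) / c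
            <= Rinf (image_on f (a + INR i * h) (a + (INR i + 1) * h))) as Hi.
  { apply (Rmult_le_compat_l h) in Hi; [|lra].
    replace (h * (_ / c)) with (h * Rinf (image_on g (a + INR i * h) (a + (INR i + 1) * h)) / c)
      in Hi by (field; lra).
    apply Rmult_le_reg_r with (/ c); [apply Rinv_0_lt_compat; lra|].
    replace (h * Rinf (image_on f (a + INR i * h) (a + (INR i + 1) * h)) * c * / c)
      with (h * Rinf (image_on f (a + INR i * h) (a + (INR i + 1) * h))) by (field; lra).
    exact Hi. }
  apply Rinf_image_on_ge; [nra|]. intros x Hx.
  assert (Rinf (image_on g (a + INR i * h) (a + (INR i + 1) * h)) <= g x)
    by (apply Rinf_image_on_le; [nra | intros t Ht; apply Hgf; auto | auto]).
  destruct (Hgf x ltac:(nra)). apply Rmult_le_reg_l with c; [lra | field_simplify; lra].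
Qed.

Lemma MVT_lower_bound (G G' phi : R -> R) x y : 0 < x <= y ->
  (forall c, x <= c <= y -> derivable_pt_lim G c (G' c)) ->
  (forall c, x <= c <= y -> phi c <= G' c) ->
  exists xi, x <= xi <= y /\ (y - x) * phi xi <= G y - G x.
Proof.
  intros Hxy Hd Hp. destruct (Req_dec x y) as [<-|Hne].
  - exists x. split; lra.
  - destruct (MVT_cor2 G G' x y ltac:(lra) Hd) as [c [-> Hc]].
    exists c. split; [lra|]. rewrite Rmult_comm. apply Rmult_le_compat_r; [lra | apply Hp; lra].
Qed.

(* A cell [x,y] of a lower sum of [phi] contributes at most the increment of any function
   whose derivative dominates [phi]; here that function is glued from two pieces at [e]. *)
Lemma cell_le_glued_increment (phi G1 G1' G2 G2' : R -> R) e : 0 < e ->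
  (forall t, 0 < t -> 0 <= phi t) ->
  (forall t, 0 < t -> derivable_pt_lim G1 t (G1' t)) ->
  (forall t, 0 < t -> derivable_pt_lim G2 t (G2' t)) ->
  G1 e = G2 e ->
  (forall t, 0 < t -> t <= e -> phi t <= G1' t) ->
  (forall t, e <= t -> phi t <= G2' t) ->
  let G t := if Rle_dec t e then G1 t else G2 t in
  forall x y, 0 < x -> x < y -> (y - x) * Rinf (image_on phi x y) <= G y - G x.
Proof.
  intros He Hp HG1 HG2 HGe H1 H2 G x y Hx Hxy.
  assert (E1 : forall t, t <= e -> G t = G1 t) by (intros t Ht; unfold G; destruct (Rle_dec t e); [auto | lra]).
  assert (E2 : forall t, e <= t -> G t = G2 t).
  { intros t Ht. unfold G. destruct (Rle_dec t e); [replace t with e by lra; auto | auto]. }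
  assert (Hinf : forall xi, x <= xi <= y -> Rinf (image_on phi x y) <= phi xi)
    by (intros xi Hxi; apply Rinf_image_on_le; auto).
  destruct (Rle_dec y e) as [Hye|Hye]; [|destruct (Rle_dec e x) as [Hex|Hex]].
  - destruct (MVT_lower_bound G1 G1' phi x y ltac:(lra)) as [xi [Hxi Hb]].
    + intros c Hc; apply HG1; lra.
    + intros c Hc; apply H1; lra.
    + rewrite !E1 by lra. specialize (Hinf xi Hxi). nra.
  - destruct (MVT_lower_bound G2 G2' phi x y ltac:(lra)) as [xi [Hxi Hb]].
    + intros c Hc; apply HG2; lra.
    + intros c Hc; apply H2; lra.
    + rewrite !E2 by lra. specialize (Hinf xi Hxi). nra.
  - destruct (MVT_lower_bound G1 G1' phi x e ltac:(lra)) as [xi1 [Hxi1 Hb1]].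
    + intros c Hc; apply HG1; lra.
    + intros c Hc; apply H1; lra.
    + destruct (MVT_lower_bound G2 G2' phi e y ltac:(lra)) as [xi2 [Hxi2 Hb2]].
      * intros c Hc; apply HG2; lra.
      * intros c Hc; apply H2; lra.
      * rewrite E2, E1 by lra. rewrite HGe in Hb1.
        pose proof (Hinf xi1 ltac:(lra)). pose proof (Hinf xi2 ltac:(lra)).
        assert ((e - x) * Rinf (image_on phi x y) <= (e - x) * phi xi1) by (apply Rmult_le_compat_l; lra).
        assert ((y - e) * Rinf (image_on phi x y) <= (y - e) * phi xi2) by (apply Rmult_le_compat_l; lra).
        nra.
Qed.

Lemma derivable_pt_lim_Rpower_affine c p d t : 0 < t ->
  derivable_pt_lim (fun s => c * Rpower s p + d) t (c * (p * Rpower t (p - 1))).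
Proof.
  intros Ht. rewrite <- (Rplus_0_r (c * _)).
  apply (derivable_pt_lim_plus (fun s => c * Rpower s p) (fun _ => d)).
  - apply (derivable_pt_lim_scal (fun s => Rpower s p)). now apply derivable_pt_lim_power.
  - apply derivable_pt_lim_const.
Qed.

Lemma Rpower_pos x p : 0 < Rpower x p.
Proof. apply exp_pos. Qed.

Lemma Rpower_le_opp x y p : 0 < x <= y -> 0 <= p -> Rpower y (- p) <= Rpower x (- p).
Proof.
  intros Hxy Hp. rewrite !Rpower_Ropp.
  apply Rinv_le_contravar; [apply Rpower_pos | apply Rle_Rpower_l; lra].
Qed.

Lemma Rpower_div_id t p : 0 < t -> Rpower t p / t = Rpower t (p - 1).
Proof.
  intros Ht. replace (p - 1) with (p + - (1)) by ring.
  now rewrite Rpower_plus, Rpower_Ropp, Rpower_1.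
Qed.

Lemma Rpower_invK x r : 0 < x -> 0 < r -> Rpower (Rpower x r) (1 / r) = x.
Proof. intros Hx Hr. rewrite Rpower_mult. replace (r * (1 / r)) with 1 by (field; lra). now apply Rpower_1. Qed.

Lemma rpow_ge0 x p : 0 <= rpow x p.
Proof. unfold rpow. destruct (Req_EM_T x 0); [lra | left; apply Rpower_pos]. Qed.

Lemma rpow_Rpower x p : 0 < x -> rpow x p = Rpower x p.
Proof. intros Hx. unfold rpow. destruct (Req_EM_T x 0); [lra | reflexivity]. Qed.

Lemma rpow_0 p : rpow 0 p = 0.
Proof. unfold rpow. destruct (Req_EM_T 0 0); [reflexivity | lra]. Qed.

Lemma rpow_le x y p : 0 <= x <= y -> 0 <= p -> rpow x p <= rpow y p.
Proof.
  intros Hxy Hp. destruct (Req_dec x 0) as [->|Hx]; [rewrite rpow_0; apply rpow_ge0|].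
  rewrite !rpow_Rpower by lra. apply Rle_Rpower_l; lra.
Qed.

Lemma rpow_mul c x p : 0 < c -> 0 <= x -> rpow (c * x) p = Rpower c p * rpow x p.
Proof.
  intros Hc Hx. destruct (Req_dec x 0) as [->|Hx']; [rewrite Rmult_0_r, rpow_0; ring|].
  rewrite !rpow_Rpower by nra. rewrite Rpower_mult_distr; auto; lra.
Qed.

(* The norm of [(X0,X1)_{theta,q}] evaluated on an arbitrary profile [phi] in place of
   [t -> t^-theta K(t,f)]. *)
Definition profile_norm (q : qexp) (phi : R -> R) : R :=
  match q with
  | qfin r => rpow (integral0inf (fun t => rpow (phi t) r / t)) (1 / r)
  | qinf => Rsup (fun y => exists t, 0 < t /\ y = phi t)
  end.

Definition profile_finite (q : qexp) (phi : R -> R) : Prop :=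
  match q with
  | qfin r => integrable0inf (fun t => rpow (phi t) r / t)
  | qinf => bound (fun y => exists t, 0 < t /\ y = phi t)
  end.

Lemma interp_normE B th q f : interp_norm B th q f = profile_norm q (fun t => tK B th t f).
Proof. now destruct q. Qed.

Lemma in_interp_profile_finite B th q f : in_interp B th q f -> profile_finite q (fun t => tK B th t f).
Proof. now destruct q. Qed.

Section ProfileNorm.
Variables (q : qexp) (phi : R -> R).
Hypothesis q_ok : qexp_ok q.
Hypothesis phi_ge0 : forall t, 0 < t -> 0 <= phi t.

Let weight_ge0 r : forall t, 0 < t -> 0 <= rpow (phi t) r / t.
Proof. intros t Ht. apply Rmult_le_pos; [apply rpow_ge0 | left; now apply Rinv_0_lt_compat]. Qed.

(* A doubling-regular profile keeps half its value on [s, 2s], whose [dt/t]-measure is at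
   least [1/2]. *)
Lemma profile_le_norm :
  profile_finite q phi ->
  (forall s t, 0 < s -> s <= t <= 2 * s -> phi s <= 2 * phi t) ->
  forall s, 0 < s -> phi s <= 4 * profile_norm q phi.
Proof.
  intros Hfin Hreg s Hs. pose proof (phi_ge0 s Hs). destruct q as [r|]; simpl in *.
  - set (I := fun t => rpow (phi t) r / t).
    set (S := integral0inf I).
    assert (Hinf : rpow (phi s / 2) r / (2 * s) <= Rinf (image_on I s (2 * s))).
    { apply Rinf_image_on_ge; [lra|]. intros x Hx. unfold I.
      pose proof (Hreg s x Hs Hx).
      assert (rpow (phi s / 2) r <= rpow (phi x) r) by (apply rpow_le; lra).
      unfold Rdiv. apply Rmult_le_compat; [apply rpow_ge0 | left; apply Rinv_0_lt_compat; lra | auto |].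
      apply Rinv_le_contravar; lra. }
    assert (HS2 : rpow (phi s / 2) r / 2 <= S).
    { apply Rle_trans with (s * Rinf (image_on I s (2 * s))); [|now apply Rsup_ub, lower_sums_single].
      replace (rpow (phi s / 2) r / 2) with (s * (rpow (phi s / 2) r / (2 * s))) by (field; lra).
      apply Rmult_le_compat_l; lra. }
    destruct (Req_dec (phi s) 0) as [E|E]; [rewrite E; pose proof (rpow_ge0 S (1 / r)); lra|].
    set (X := phi s / 4). assert (HX : 0 < X) by (unfold X; lra).
    replace (phi s / 2) with (2 * X) in HS2 by (unfold X; field).
    rewrite rpow_Rpower, <- Rpower_mult_distr in HS2 by lra.
    assert (H2 : 2 <= Rpower 2 r) by (rewrite <- (Rpower_1 2) at 1 by lra; apply Rle_Rpower; lra).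
    pose proof (Rpower_pos X r).
    assert (HS3 : Rpower X r <= S) by nra.
    rewrite rpow_Rpower by lra.
    enough (X <= Rpower S (1 / r)) by (unfold X in *; lra).
    rewrite <- (Rpower_invK X r) at 1 by lra.
    apply Rle_Rpower_l; [apply Rlt_le, Rdiv_lt_0_compat; lra | split; auto].
  - enough (phi s <= Rsup (fun y => exists t, 0 < t /\ y = phi t)) by lra.
    apply Rsup_ub; auto. now exists s.
Qed.

Lemma profile_norm_le_scaled psi c : profile_finite q phi -> 0 < c ->
  (forall t, 0 < t -> 0 <= psi t <= c * phi t) -> profile_norm q psi <= c * profile_norm q phi.
Proof.
  intros Hfin Hc H. destruct q as [r|]; simpl in *.
  - set (Ip := fun t => rpow (phi t) r / t). set (Is := fun t => rpow (psi t) r / t).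
    assert (HIs : forall t, 0 < t -> 0 <= Is t <= Rpower c r * Ip t).
    { intros t Ht. unfold Is, Ip. destruct (H t Ht).
      assert (rpow (psi t) r <= Rpower c r * rpow (phi t) r)
        by (rewrite <- rpow_mul by nra; apply rpow_le; lra).
      pose proof (rpow_ge0 (psi t) r). pose proof (Rinv_0_lt_compat t Ht).
      unfold Rdiv. split; [nra|]. rewrite <- Rmult_assoc. apply Rmult_le_compat_r; lra. }
    pose proof (Rpower_pos c r) as Hcr.
    pose proof (lower_sums_le_scaled Is Ip _ Hcr HIs Hfin) as Hm.
    assert (H1 : integral0inf Is <= Rpower c r * integral0inf Ip)
      by (apply Rsup_le; [apply lower_sums_nonempty | auto]).
    assert (H0 : 0 <= integral0inf Is)
      by (apply integral0inf_ge0; [intros t Ht; apply HIs; auto | exists (Rpower c r * integral0inf Ip); auto]).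
    assert (H0' : 0 <= integral0inf Ip) by (apply integral0inf_ge0; [apply weight_ge0 | exact Hfin]).
    apply Rle_trans with (rpow (Rpower c r * integral0inf Ip) (1 / r)).
    + apply rpow_le; [lra | apply Rlt_le, Rdiv_lt_0_compat; lra].
    + rewrite rpow_mul, Rpower_invK by lra. apply Rle_refl.
  - apply Rsup_le; [exists (psi 1), 1; split; auto; lra|].
    intros y [t [Ht ->]]. destruct (H t Ht).
    assert (phi t <= Rsup (fun y => exists t, 0 < t /\ y = phi t)) by (apply Rsup_ub; auto; now exists t).
    nra.
Qed.

End ProfileNorm.

(* The bound is [int_0^e K1 t^(be-1) dt + int_e^oo M t^(-ga-1) dt], via the antiderivative
   [K1/be t^be] glued at [e] with [M' - M/ga t^-ga]. *)
Lemma integral0inf_le_power_pieces (I : R -> R) e K1 M be ga :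
  0 < e -> 0 < K1 -> 0 < M -> 0 < be -> 0 < ga ->
  (forall t, 0 < t -> 0 <= I t) ->
  (forall t, 0 < t -> t <= e -> I t <= K1 * Rpower t (be - 1)) ->
  (forall t, e <= t -> I t <= M * Rpower t (- ga - 1)) ->
  integrable0inf I /\ integral0inf I <= K1 / be * Rpower e be + M / ga * Rpower e (- ga).
Proof.
  intros He HK1 HM Hbe Hga HI HI1 HI2.
  set (G1 := fun s => K1 / be * Rpower s be + 0).
  set (M' := G1 e + M / ga * Rpower e (- ga)).
  set (G2 := fun s => - (M / ga) * Rpower s (- ga) + M').
  pose proof (Rdiv_lt_0_compat _ _ HK1 Hbe). pose proof (Rdiv_lt_0_compat _ _ HM Hga).
  assert (HG1 : forall s, 0 < s -> s <= e -> 0 <= G1 s <= G1 e).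
  { intros s Hs Hse. unfold G1. pose proof (Rpower_pos s be).
    pose proof (Rle_Rpower_l s e be ltac:(lra) ltac:(lra)). nra. }
  assert (HG2 : forall s, e <= s -> 0 <= G2 s <= M').
  { intros s Hse. unfold G2, M'. pose proof (Rpower_pos s (- ga)). pose proof (HG1 e He (Rle_refl e)).
    pose proof (Rpower_le_opp e s ga ltac:(lra) ltac:(lra)). nra. }
  assert (HLS : forall s, lower_sums I s -> s <= M').
  { apply (lower_sums_le_increment I) with (G := fun t => if Rle_dec t e then G1 t else G2 t).
    - apply (cell_le_glued_increment I G1 (fun t => K1 / be * (be * Rpower t (be - 1)))
             G2 (fun t => - (M / ga) * (- ga * Rpower t (- ga - 1))) e He HI);
        try (intros t Ht; apply derivable_pt_lim_Rpower_affine; lra).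
      + unfold G2, M'. ring.
      + intros t Ht Hte. replace (K1 / be * (be * Rpower t (be - 1))) with (K1 * Rpower t (be - 1))
          by (field; lra). auto.
      + intros t Hte. replace (- (M / ga) * (- ga * Rpower t (- ga - 1))) with (M * Rpower t (- ga - 1))
          by (field; lra). auto.
    - intros x y Hx Hxy.
      destruct (Rle_dec x e); destruct (Rle_dec y e);
        try pose proof (HG1 x ltac:(lra) ltac:(lra)); try pose proof (HG1 y ltac:(lra) ltac:(lra));
        try pose proof (HG2 x ltac:(lra)); try pose proof (HG2 y ltac:(lra));
        unfold M' in *; pose proof (Rpower_pos e (- ga)); nra. }
  split; [now exists M'|].
  apply Rsup_le; [apply lower_sums_nonempty|].
  intros s Hs. specialize (HLS s Hs). unfold M', G1 in HLS. lra.
Qed.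

Definition pieces_const (q : qexp) (th0 th : R) : R :=
  match q with
  | qfin r => Rpower (1 / ((1 - th) * r) + 1 / ((th - th0) * r)) (1 / r)
  | qinf => 1
  end.

Lemma pieces_const_pos q th0 th : 0 < pieces_const q th0 th.
Proof. destruct q; simpl; [apply Rpower_pos | lra]. Qed.

Lemma rpow_div_le_Rpower x c t a r : 0 < t -> 0 < c -> 0 < r -> 0 <= x <= c * Rpower t a ->
  rpow x r / t <= Rpower c r * Rpower t (a * r - 1).
Proof.
  intros Ht Hc Hr Hx. pose proof (Rpower_pos t a).
  rewrite <- Rpower_div_id by exact Ht. unfold Rdiv. rewrite <- Rmult_assoc.
  apply Rmult_le_compat_r; [left; now apply Rinv_0_lt_compat|].
  apply Rle_trans with (rpow (c * Rpower t a) r); [apply rpow_le; lra|].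
  rewrite rpow_mul, rpow_Rpower, Rpower_mult by lra. apply Rle_refl.
Qed.

Section PowerPieces.
Variables (psi : R -> R) (th0 th e A : R).
Hypotheses (th_range : 0 < th0 < th) (th_lt1 : th < 1) (e_pos : 0 < e) (A_pos : 0 < A).
Hypothesis psi_ge0 : forall t, 0 < t -> 0 <= psi t.
Hypothesis psi_small : forall t, 0 < t -> t <= e -> psi t <= A * Rpower t (1 - th) * Rpower e (th0 - 1).
Hypothesis psi_large : forall t, e <= t -> psi t <= A * Rpower t (th0 - th).

Lemma integral0inf_rpow_le_power_pieces r : 1 <= r ->
  integrable0inf (fun t => rpow (psi t) r / t) /\
  integral0inf (fun t => rpow (psi t) r / t)
    <= Rpower A r * Rpower e (- ((th - th0) * r)) * (1 / ((1 - th) * r) + 1 / ((th - th0) * r)).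
Proof.
  intros Hr. set (I := fun t => rpow (psi t) r / t).
  set (M := Rpower A r). set (be := (1 - th) * r). set (ga := (th - th0) * r).
  set (K1 := Rpower (A * Rpower e (th0 - 1)) r).
  assert (Hbe : 0 < be) by (unfold be; nra). assert (Hga : 0 < ga) by (unfold ga; nra).
  assert (HM : 0 < M) by apply Rpower_pos. assert (HK1 : 0 < K1) by apply Rpower_pos.
  pose proof (Rpower_pos e (th0 - 1)).
  assert (HI : forall t, 0 < t -> 0 <= I t).
  { intros t Ht. unfold I. apply Rmult_le_pos; [apply rpow_ge0 | left; now apply Rinv_0_lt_compat]. }
  assert (HI1 : forall t, 0 < t -> t <= e -> I t <= K1 * Rpower t (be - 1)).
  { intros t Ht Hte. apply rpow_div_le_Rpower; [auto | nra | lra |]. split; [auto|].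
    replace (A * Rpower e (th0 - 1) * Rpower t (1 - th))
      with (A * Rpower t (1 - th) * Rpower e (th0 - 1)) by ring. auto. }
  assert (HI2 : forall t, e <= t -> I t <= M * Rpower t (- ga - 1)).
  { intros t Hte. replace (- ga - 1) with ((th0 - th) * r - 1) by (unfold ga; ring).
    apply rpow_div_le_Rpower; [lra | auto | lra |]. split; [apply psi_ge0; lra | auto]. }
  destruct (integral0inf_le_power_pieces I e K1 M be ga e_pos HK1 HM Hbe Hga HI HI1 HI2) as [Hint HS].
  split; [exact Hint|]. apply Rle_trans with (1 := HS). right.
  unfold K1. rewrite <- Rpower_mult_distr, Rpower_mult by lra. fold M.
  replace (M * Rpower e ((th0 - 1) * r) / be * Rpower e be)
    with (M / be * (Rpower e ((th0 - 1) * r) * Rpower e be)) by (field; lra).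
  rewrite <- Rpower_plus. replace ((th0 - 1) * r + be) with (- ga) by (unfold be, ga; ring).
  field; lra.
Qed.

Lemma profile_norm_le_power_pieces q : qexp_ok q ->
  profile_norm q psi <= A * Rpower e (th0 - th) * pieces_const q th0 th.
Proof.
  intros Hq. destruct q as [r|]; simpl in *.
  - destruct (integral0inf_rpow_le_power_pieces r Hq) as [Hint HS].
    set (D := 1 / ((1 - th) * r) + 1 / ((th - th0) * r)) in HS |- *.
    assert (HD : 0 < D) by (unfold D; pose proof (Rdiv_lt_0_compat 1 ((1 - th) * r));
                              pose proof (Rdiv_lt_0_compat 1 ((th - th0) * r)); nra).
    pose proof (Rpower_pos A r). pose proof (Rpower_pos e (- ((th - th0) * r))).
    apply Rle_trans with (rpow (Rpower A r * Rpower e (- ((th - th0) * r)) * D) (1 / r)).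
    + apply rpow_le; [split; [apply integral0inf_ge0; auto | auto] | apply Rlt_le, Rdiv_lt_0_compat; lra].
      intros t Ht. apply Rmult_le_pos; [apply rpow_ge0 | left; now apply Rinv_0_lt_compat].
    + rewrite rpow_Rpower by (apply Rmult_lt_0_compat; [apply Rmult_lt_0_compat|]; auto).
      rewrite <- !Rpower_mult_distr by (try apply Rmult_lt_0_compat; auto).
      rewrite !Rpower_invK, Rpower_mult by lra.
      replace (- ((th - th0) * r) * (1 / r)) with (th0 - th) by (field; lra). apply Rle_refl.
  - apply Rsup_le; [exists (psi 1), 1; split; auto; lra|].
    intros y [t [Ht ->]]. rewrite Rmult_1_r.
    destruct (Rle_dec t e).
    + apply Rle_trans with (1 := psi_small t Ht r).
      pose proof (Rle_Rpower_l t e (1 - th) ltac:(lra) ltac:(lra)).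
      rewrite Rmult_assoc. apply Rmult_le_compat_l; [lra|].
      replace (th0 - th) with ((1 - th) + (th0 - 1)) by ring. rewrite Rpower_plus.
      apply Rmult_le_compat_r; [left; apply Rpower_pos | lra].
    + apply Rle_trans with (1 := psi_large t ltac:(lra)). apply Rmult_le_compat_l; [lra|].
      replace (th0 - th) with (- (th - th0)) by ring. apply Rpower_le_opp; lra.
Qed.

End PowerPieces.

Lemma tK_ge0 B th t f : 0 < t -> 0 <= tK B th t f.
Proof. intros Ht. apply Rmult_le_pos; [left; apply Rpower_pos | apply Kfun_ge0; lra]. Qed.

Lemma tK_doubling B th f : 0 <= th <= 1 ->
  forall s t, 0 < s -> s <= t <= 2 * s -> tK B th s f <= 2 * tK B th t f.
Proof.
  intros Hth s t Hs Hst. unfold tK.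
  pose proof (Kfun_mono B s t f ltac:(lra)). pose proof (Kfun_ge0 B s f ltac:(lra)).
  assert (H2s : Rpower (2 * s) (- th) <= Rpower t (- th)) by (apply Rpower_le_opp; lra).
  rewrite <- Rpower_mult_distr in H2s by lra.
  assert (/ 2 <= Rpower 2 (- th)).
  { rewrite Rpower_Ropp. apply Rinv_le_contravar; [apply Rpower_pos|].
    rewrite <- (Rpower_1 2) at 2 by lra. apply Rle_Rpower; lra. }
  pose proof (Rpower_pos s (- th)). pose proof (Rpower_pos t (- th)).
  assert (Rpower s (- th) <= 2 * Rpower t (- th)) by nra.
  nra.
Qed.

Lemma Kfun_le_interp_norm B q th f : qexp_ok q -> 0 < th < 1 -> in_interp B th q f ->
  forall s, 0 < s -> Kfun B s f <= 4 * Rpower s th * interp_norm B th q f.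
Proof.
  intros Hq Hth Hin s Hs. rewrite interp_normE.
  pose proof (profile_le_norm q (fun t => tK B th t f) Hq (fun t Ht => tK_ge0 B th t f Ht)
      (in_interp_profile_finite _ _ _ _ Hin) (tK_doubling B th f ltac:(lra)) s Hs) as H.
  set (N := profile_norm q _) in *. cbv beta in H. unfold tK in H.
  pose proof (Rpower_pos s th).
  assert (Rpower s th * Rpower s (- th) = 1)
    by (rewrite <- Rpower_plus; replace (th + - th) with 0 by ring; now apply Rpower_O).
  apply Rmult_le_compat_l with (r := Rpower s th) in H; [|lra].
  rewrite <- Rmult_assoc, H1, Rmult_1_l in H. lra.
Qed.

Lemma interp_norm_ge0 B q th f : qexp_ok q -> 0 < th < 1 -> in_interp B th q f ->
  0 <= interp_norm B th q f.
Proof.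
  intros Hq Hth Hin. pose proof (Kfun_le_interp_norm B q th f Hq Hth Hin 1 ltac:(lra)).
  pose proof (Kfun_ge0 B 1 f ltac:(lra)). replace (Rpower 1 th) with 1 in H by (unfold Rpower; now rewrite ln_1, Rmult_0_r, exp_0).
  lra.
Qed.

Lemma Kfun_near_minimizer B eps (f : V B) : 0 < eps -> 0 < Kfun B eps f ->
  exists g, X1 g /\ n0 (vadd f (vopp g)) <= 2 * Kfun B eps f /\ eps * n1 g <= 2 * Kfun B eps f.
Proof.
  intros He Hk. destruct (Kfun_approx B eps f (Kfun B eps f) ltac:(lra) Hk) as [g [Hg Hlt]].
  exists g. pose proof (n0_nonneg _ (vadd f (vopp g))). pose proof (n1_nonneg _ g Hg).
  repeat split; auto; nra.
Qed.

Section NearMinimizer.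
Variables (B : banach_couple) (eps : R) (f g : V B).
Hypotheses (eps_pos : 0 < eps) (g_X1 : X1 g).
Hypothesis near0 : n0 (vadd f (vopp g)) <= 2 * Kfun B eps f.
Hypothesis near1 : eps * n1 g <= 2 * Kfun B eps f.

Lemma Kfun_near_le_small t : 0 < t -> t <= eps -> Kfun B t g <= t / eps * (2 * Kfun B eps f).
Proof.
  intros Ht Hte. apply Rle_trans with (t * n1 g); [apply Kfun_X1_le; auto; lra|].
  replace (t / eps * (2 * Kfun B eps f)) with (t * (2 * Kfun B eps f / eps)) by (field; lra).
  apply Rmult_le_compat_l; [lra|]. apply Rmult_le_reg_l with eps; [lra | field_simplify; lra].
Qed.

Lemma Kfun_near_le_large t : eps <= t -> Kfun B t g <= Kfun B t f + 2 * Kfun B eps f.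
Proof. intros Hte. pose proof (Kfun_sub_le B t f g ltac:(lra)). lra. Qed.

Lemma Kfun_near_le t : 0 < t -> Kfun B t g <= 3 * Kfun B t f.
Proof.
  intros Ht. pose proof (Kfun_ge0 B t f ltac:(lra)). destruct (Rle_dec t eps).
  - pose proof (Kfun_le_ratio B t eps f ltac:(lra)). pose proof (Kfun_near_le_small t Ht r).
    enough (t / eps * Kfun B eps f <= Kfun B t f) by lra.
    apply Rle_trans with (t / eps * (eps / t * Kfun B t f)).
    + apply Rmult_le_compat_l; auto. apply Rlt_le, Rdiv_lt_0_compat; lra.
    + right; field; lra.
  - pose proof (Kfun_mono B eps t f ltac:(lra)). pose proof (Kfun_near_le_large t ltac:(lra)). lra.
Qed.

Variables (q : qexp) (th0 : R).
Hypotheses (q_ok : qexp_ok q) (th0_range : 0 < th0 < 1) (f_interp : in_interp B th0 q f).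
Hypothesis Kfun_pos : 0 < Kfun B eps f.

Lemma interp_norm_near_le : interp_norm B th0 q g <= 3 * interp_norm B th0 q f.
Proof.
  rewrite !interp_normE.
  apply profile_norm_le_scaled;
    [exact q_ok | apply in_interp_profile_finite, f_interp | lra|].
  intros t Ht. split; [now apply tK_ge0|].
  unfold tK. pose proof (Rpower_pos t (- th0)). pose proof (Kfun_near_le t Ht). nra.
Qed.

Lemma tK_near_le_small th t : 0 < t -> t <= eps ->
  tK B th t g <= 8 * interp_norm B th0 q f * Rpower t (1 - th) * Rpower eps (th0 - 1).
Proof.
  intros Ht Hte. set (N := interp_norm B th0 q f).
  assert (Hk : Kfun B eps f <= 4 * Rpower eps th0 * N)
    by now apply Kfun_le_interp_norm.
  unfold tK. pose proof (Rpower_pos t (- th)).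
  apply Rle_trans with (Rpower t (- th) * (t / eps * (8 * Rpower eps th0 * N))).
  - apply Rmult_le_compat_l; [lra|].
    apply Rle_trans with (1 := Kfun_near_le_small t Ht Hte).
    apply Rmult_le_compat_l; [apply Rlt_le, Rdiv_lt_0_compat|]; lra.
  - right. rewrite <- (Rpower_div_id eps th0) by lra.
    replace (1 - th) with (- th + 1) by ring. rewrite Rpower_plus, Rpower_1 by lra. field. lra.
Qed.

Lemma tK_near_le_large th t : eps <= t ->
  tK B th t g <= 12 * interp_norm B th0 q f * Rpower t (th0 - th).
Proof.
  intros Hte. pose proof (interp_norm_ge0 B q th0 f q_ok th0_range f_interp) as HN.
  set (N := interp_norm B th0 q f) in *.
  pose proof (Kfun_le_interp_norm B q th0 f q_ok th0_range f_interp) as Kf. fold N in Kf.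
  pose proof (Kf eps eps_pos). pose proof (Kf t ltac:(lra)).
  pose proof (Kfun_near_le_large t Hte). pose proof (Rpower_pos t (- th)).
  assert (Rpower eps th0 <= Rpower t th0) by (apply Rle_Rpower_l; lra).
  assert (Kfun B t g <= 12 * Rpower t th0 * N) by nra.
  unfold tK. replace (th0 - th) with (th0 + - th) by ring. rewrite Rpower_plus.
  replace (12 * N * (Rpower t th0 * Rpower t (- th))) with (Rpower t (- th) * (12 * Rpower t th0 * N)) by ring.
  apply Rmult_le_compat_l; lra.
Qed.

(* [g] is as smooth as [f] above scale [eps] and lies in [X1] below it, which gains the factor
   [eps^(th0 - th)] in the stronger norm. *)
Lemma interp_norm_near_le_stronger th : th0 < th < 1 ->
  Rpower eps th * interp_norm B th q g
    <= 12 * pieces_const q th0 th * (Rpower eps th0 * interp_norm B th0 q f).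
Proof.
  intros Hth. set (N := interp_norm B th0 q f).
  assert (Hk : Kfun B eps f <= 4 * Rpower eps th0 * N) by now apply Kfun_le_interp_norm.
  pose proof (Rpower_pos eps th0).
  assert (HN : 0 < N) by nra.
  assert (HP : interp_norm B th q g <= 12 * N * Rpower eps (th0 - th) * pieces_const q th0 th).
  { rewrite interp_normE. apply profile_norm_le_power_pieces; try lra; auto.
    - intros t Ht. now apply tK_ge0.
    - intros t Ht Hte. pose proof (tK_near_le_small th t Ht Hte). fold N in H0.
      pose proof (Rpower_pos t (1 - th)). pose proof (Rpower_pos eps (th0 - 1)).
      assert (0 <= N * Rpower t (1 - th) * Rpower eps (th0 - 1))
        by (apply Rmult_le_pos; [apply Rmult_le_pos|]; lra).
      lra.
    - intros t Hte. apply tK_near_le_large, Hte. }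
  apply Rle_trans with (Rpower eps th * (12 * N * Rpower eps (th0 - th) * pieces_const q th0 th));
    [apply Rmult_le_compat_l; [left; apply Rpower_pos | exact HP]|].
  assert (Heps : Rpower eps th * Rpower eps (th0 - th) = Rpower eps th0)
    by (rewrite <- Rpower_plus; f_equal; ring).
  rewrite <- Heps. right; ring.
Qed.

End NearMinimizer.

Definition near_weight (q : qexp) (theta : nat -> R) (i : nat) : R :=
  if Nat.eqb i 0 then 3 else 12 * pieces_const q (theta 0%nat) (theta i).

Lemma near_weight_ge0 q theta i : 0 <= near_weight q theta i.
Proof.
  unfold near_weight. destruct (Nat.eqb i 0); [lra|].
  pose proof (pieces_const_pos q (theta 0%nat) (theta i)). lra.
Qed.

Lemma sum_interp_norm_near_le B q n theta eps (f g : V B) : qexp_ok q ->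
  0 < theta 0%nat < 1 -> (forall i, (0 < i <= n)%nat -> theta 0%nat < theta i < 1) ->
  0 < eps -> X1 g -> n0 (vadd f (vopp g)) <= 2 * Kfun B eps f -> eps * n1 g <= 2 * Kfun B eps f ->
  0 < Kfun B eps f -> in_interp B (theta 0%nat) q f ->
  sum_f_R0 (fun i => Rpower eps (theta i) * interp_norm B (theta i) q g) n
    <= sum_f_R0 (near_weight q theta) n * (Rpower eps (theta 0%nat) * interp_norm B (theta 0%nat) q f).
Proof.
  intros Hq Hth0 Hrange Heps Hg Hg0 Hg1 Hk Hf.
  rewrite Rmult_comm, scal_sum. apply sum_Rle. intros [|i] Hi; unfold near_weight; simpl.
  - pose proof (interp_norm_near_le B eps f g Heps Hg Hg0 Hg1 q _ Hq Hf).
    pose proof (Rpower_pos eps (theta 0%nat)). nra.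
  - apply (interp_norm_near_le_stronger B eps f g Heps Hg Hg0 Hg1 q _ Hq Hth0 Hf Hk), Hrange. lia.
Qed.

Lemma increasing_lt n (theta : nat -> R) : (forall i, (S i < n)%nat -> theta i < theta (S i)) ->
  forall i j, (i < j < n)%nat -> theta i < theta j.
Proof.
  intros Hinc i j. induction j as [|j IH]; intros Hij; [lia|].
  specialize (Hinc j ltac:(lia)). destruct (Nat.eq_dec i j) as [->|Hne]; [exact Hinc|].
  specialize (IH ltac:(lia)). lra.
Qed.

Lemma increasing_range n (theta : nat -> R) : (1 <= n)%nat -> 0 < theta 0%nat ->
  (forall i, (S i < n)%nat -> theta i < theta (S i)) -> theta (n - 1)%nat < 1 ->
  0 < theta 0%nat < 1 /\ forall i, (0 < i <= n - 1)%nat -> theta 0%nat < theta i < 1.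
Proof.
  intros Hn H0 Hinc H1.
  assert (Hrange : forall i, (0 < i <= n - 1)%nat -> theta 0%nat < theta i < 1).
  { intros i Hi. split; [apply (increasing_lt n); auto; lia|].
    destruct (Nat.eq_dec i (n - 1)) as [->|Hne]; [exact H1|].
    pose proof (increasing_lt n theta Hinc i (n - 1) ltac:(lia)). lra. }
  split; [|exact Hrange]. split; [exact H0|].
  destruct (Nat.eq_dec (n - 1) 0) as [Hn1|Hn1]; [now rewrite <- Hn1|].
  pose proof (Hrange (n - 1)%nat ltac:(lia)). lra.
Qed.

Theorem lemma2p2 (B : banach_couple) (q : qexp) (hq : qexp_ok q)
  (n : nat) (hn : (1 <= n)%nat) (theta : nat -> R)
  (htheta0 : 0 < theta 0%nat)
  (htheta_incr : forall i, (S i < n)%nat -> theta i < theta (S i))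
  (htheta1 : theta (n - 1)%nat < 1)
  (C0 C1 : R) (hC0 : 0 < C0) (hC1 : 0 < C1) :
  exists C : R, 0 < C /\
    forall (eps : R) (l : V B -> R),
      0 < eps ->
      linear_functional B l ->
      (forall f : V B, Rabs (l f) <= C0 * n0 f) ->
      (forall f : V B, X1 f ->
         Rabs (l f) <= C1 * (sum_f_R0 (fun i => Rpower eps (theta i) * interp_norm B (theta i) q f)
                               (n - 1) + eps * n1 f)) ->
      forall f : V B, in_interp B (theta 0%nat) q f ->
        Rabs (l f) <= C * Rpower eps (theta 0%nat) * interp_norm B (theta 0%nat) q f.
Proof.
  destruct (increasing_range n theta hn htheta0 htheta_incr htheta1) as [Hth0 Hrange].
  set (W := sum_f_R0 (near_weight q theta) (n - 1)).
  assert (HW : 0 <= W) by (apply cond_pos_sum, near_weight_ge0).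
  exists (8 * C0 + C1 * (W + 8)). split; [nra|].
  intros eps l Heps [Ladd _] HC0 HC1 f Hf.
  set (E := Rpower eps (theta 0%nat) * interp_norm B (theta 0%nat) q f).
  rewrite Rmult_assoc. fold E.
  assert (HE : 0 <= E) by (apply Rmult_le_pos; [left; apply Rpower_pos | now apply interp_norm_ge0]).
  destruct (Req_dec (Kfun B eps f) 0) as [Hk0|Hk0].
  { pose proof (HC0 f) as Hl. rewrite (Kfun_eq0 B eps f Heps Hk0) in Hl.
    apply Rle_trans with 0; [lra | apply Rmult_le_pos; nra]. }
  assert (Hk : 0 < Kfun B eps f) by (pose proof (Kfun_ge0 B eps f ltac:(lra)); lra).
  assert (HkE : Kfun B eps f <= 4 * E) by (unfold E; rewrite <- Rmult_assoc; now apply Kfun_le_interp_norm).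
  destruct (Kfun_near_minimizer B eps f Heps Hk) as [g [Hg [Hg0 Hg1]]].
  pose proof (sum_interp_norm_near_le B q (n - 1) theta eps f g hq Hth0 Hrange Heps Hg Hg0 Hg1 Hk Hf)
    as Hsum. fold W E in Hsum.
  assert (Hlf : l f = l (vadd f (vopp g)) + l g) by now rewrite <- Ladd, vsub_addK.
  pose proof (Rabs_triang (l (vadd f (vopp g))) (l g)).
  pose proof (HC0 (vadd f (vopp g))). pose proof (HC1 g Hg).
  assert (C0 * n0 (vadd f (vopp g)) <= C0 * (8 * E)) by (apply Rmult_le_compat_l; lra).
  assert (C1 * (sum_f_R0 (fun i => Rpower eps (theta i) * interp_norm B (theta i) q g) (n - 1)
                + eps * n1 g) <= C1 * (W * E + 8 * E)) by (apply Rmult_le_compat_l; lra).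
  rewrite Hlf. lra.
Qed.
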